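(* If $r\ge1$ and $n_1,\ldots,n_r\ge0$ are integers with $n_1>0$ (i.e. $-n_1<0$), then \[ \zeta(-n_1,\ldots,-n_r|1)=\zeta(-n_1,\ldots,-n_r|0). \]
   Context: Normalized multiple Bernoulli polynomials: for integers $k\ge0$, $\zeta(-k|z)=-\frac{B_{k+1}(z)}{k+1}$ ($B_n(z)$ the Bernoulli polynomials, $B_n=B_n(0)$), and for $r\ge2$, $k_j\ge0$, $\zeta(-k_1,\ldots,-k_r|z)=-\frac{1}{k_r+1}\zeta(-k_1,\ldots,-k_{r-2},-k_{r-1}-k_r-1|z)-\frac12\zeta(-k_1,\ldots,-k_{r-2},-k_{r-1}-k_r|z)+\sum_{q=1}^{k_r}(-k_r)_q\frac{B_{q+1}}{(q+1)!}\zeta(-k_1,\ldots,-k_{r-2},-k_{r-1}-k_r+q|z)$, with $(a)_q=a(a+1)\cdots(a+q-1)$ (for $r=2$ the prefix is empty). *)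

From mathcomp Require Import all_boot all_order all_algebra.
Set Implicit Arguments. Unset Strict Implicit. Unset Printing Implicit Defensive.
Import Order.TTheory GRing.Theory Num.Theory.
Local Open Scope ring_scope.

(* Bernoulli numbers B_0 .. B_n (convention B_1 = -1/2, i.e. B_n = B_n(0)),
   via B_0 = 1 and sum_{k=0}^{n} C(n+1,k) B_k = 0 for n >= 1. *)
Fixpoint bern_seq (n : nat) : seq rat :=
  match n with
  | 0 => [:: 1]
  | n'.+1 =>
      let s := bern_seq n' in
      rcons s (- (n'.+2%:R)^-1 * \sum_(k < n'.+1) ('C(n'.+2, k))%:R * s`_k)
  end.

Definition bern (n : nat) : rat := (bern_seq n)`_n.

Definition bernpoly (n : nat) (z : rat) : rat :=
  \sum_(k < n.+1) ('C(n, k))%:R * bern k * z ^+ (n - k).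

Definition pochhammer (a : rat) (q : nat) : rat := \prod_(i < q) (a + i%:R).

(* zeta_aux pre m z = zeta(-k_1,...,-k_{r-1}, -m | z) where pre = [k_{r-1}; ...; k_1]
   (the prefix listed in reverse order).  Recursion in the length. *)
Fixpoint zeta_aux (pre : seq nat) (m : nat) (z : rat) : rat :=
  match pre with
  | [::] => - bernpoly m.+1 z / m.+1%:R
  | a :: pre' =>
      - (m.+1%:R)^-1 * zeta_aux pre' (a + m).+1 z
      - 2%:R^-1 * zeta_aux pre' (a + m) z
      + \sum_(1 <= q < m.+1)
          pochhammer (- m%:R) q * (bern q.+1 / (q.+1)`!%:R) * zeta_aux pre' (a + m - q) z
  end.

(* zeta(-k_1,...,-k_r | z) for ks = [k_1; ...; k_r] (r >= 1); value 0 for r = 0 (unused). *)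
Definition mzeta (ks : seq nat) (z : rat) : rat :=
  match rev ks with
  | [::] => 0
  | m :: pre => zeta_aux pre m z
  end.

From mathcomp Require Import all_boot all_order all_algebra.
Import Order.TTheory GRing.Theory Num.Theory.
Local Open Scope ring_scope.

(* For n >= 2, B_n(1) - B_n(0) = sum_{k<n} C(n,k) B_k, which vanishes by the
   recursion defining the Bernoulli numbers; so B_n(1) = B_n(0).  In the
   recursion for zeta(-k_1,...,-k_r|z), the first argument k_1 is only ever
   increased (k_1 + k_2 - q >= k_1 since q <= k_2), so after unfolding down to
   length one every term is -B_{m+1}(z)/(m+1) with m >= k_1 >= 1, and each of
   them takes the same value at z = 1 and z = 0. *)

Lemma size_bern_seq n : size (bern_seq n) = n.+1.
Proof. by elim: n => [|n IHn] //=; rewrite size_rcons IHn. Qed.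

Lemma nth_bern_seq n k : (k <= n)%N -> (bern_seq n)`_k = bern k.
Proof.
elim: n k => [|n IHn] k; first by rewrite leqn0 => /eqP ->.
rewrite leq_eqVlt => /orP[/eqP -> //|lt_kn].
by rewrite /= nth_rcons size_bern_seq lt_kn IHn.
Qed.

Lemma sum_binom_bern n : \sum_(k < n.+2) ('C(n.+2, k))%:R * bern k = 0.
Proof.
rewrite big_ord_recr /=.
have -> : bern n.+1 =
    - (n.+2%:R)^-1 * \sum_(k < n.+1) ('C(n.+2, k))%:R * (bern_seq n)`_k.
  by rewrite /bern /= nth_rcons size_bern_seq ltnn eqxx.
rewrite [X in _ + _ * (_ * X)](eq_bigr (fun k : 'I_n.+1 => ('C(n.+2, k))%:R * bern k));
  last by move=> i _; rewrite nth_bern_seq // -ltnS.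
by rewrite binSn mulrA mulrN mulfV ?pnatr_eq0 // mulN1r addrN.
Qed.

Lemma bernpoly1 n : (1 < n)%N -> bernpoly n 1 = bernpoly n 0.
Proof.
case: n => [|[|n]] // _.
rewrite /bernpoly [LHS]big_ord_recr [RHS]big_ord_recr /= subnn !expr0.
congr (_ + _); rewrite [RHS]big1; last first.
  by move=> i _; rewrite expr0n subn_eq0 leqNgt ltn_ord mulr0.
rewrite -[RHS](sum_binom_bern n).
by apply: eq_bigr => i _; rewrite expr1n mulr1.
Qed.

(* [last m pre] is the first argument k_1 of the multiple zeta value. *)
Lemma zeta_aux1 pre m : (0 < last m pre)%N -> zeta_aux pre m 1 = zeta_aux pre m 0.
Proof.
elim: pre m => [|a pre IHpre] m /= k1_gt0; first by rewrite bernpoly1.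
have zeta_pre1 m' : (a <= m')%N -> zeta_aux pre m' 1 = zeta_aux pre m' 0.
  move=> le_am'; apply: IHpre; move: k1_gt0.
  by case: (pre) => [|b p] //= a_gt0; apply: leq_trans le_am'.
rewrite !zeta_pre1 ?leq_addr ?(leqW (leq_addr _ _)) //.
congr (_ + _); apply: eq_big_nat => q /andP[_ le_qm].
by rewrite zeta_pre1 // -addnBA ?leq_addr.
Qed.

Theorem mainTheorem10 (n1 : nat) (ns : seq nat) :
  (0 < n1)%N -> mzeta (n1 :: ns) 1 = mzeta (n1 :: ns) 0.
Proof.
move=> n1_gt0; rewrite /mzeta rev_cons.
case: (rev ns) => [|m pre] /=; first by rewrite bernpoly1.
by apply: zeta_aux1; rewrite last_rcons.
Qed.
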